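(* Let $k$ be a field and $B$ a standard graded $k$-algebra of dimension $d$ with homogeneous maximal ideal $\mathfrak{m}$. Let $s\ge0$ be an integer and let $A$ be the $k$-subalgebra of $B$ generated by $d+s$ linear forms $x_1,\ldots,x_{d+s}$ of $B$. Then \[\mathfrak{m}^n=(x_1,\ldots,x_{d-1})\mathfrak{m}^{n-1}+(x_d,\ldots,x_{d+s})^n\quad\text{for all } n\gg0\] if and only if $B/A$ is a finite module over $k[x_1,\ldots,x_{d-1}]$.
   Context: A standard graded $k$-algebra is a graded $k$-algebra $B=\bigoplus_{i\ge0}B_i$ with $B_0=k$, generated as a $k$-algebra by finitely many elements of $B_1$ (linear forms). The ideals in the displayed equation are ideals of $B$. *)

From HB Require Import structures.
From mathcomp Require Import all_boot all_order all_algebra.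
From mathcomp Require Import mpoly.
Set Implicit Arguments. Unset Strict Implicit. Unset Printing Implicit Defensive.
Import GRing.Theory.
Local Open Scope ring_scope.

Section Defs.
Variables (k : fieldType) (B : comAlgType k).

(* Standard graded k-algebra structure on B, with graded pieces G i = B_i:
   each B_i is a k-subspace, B_i B_j ⊆ B_(i+j), B = ⊕_i B_i (existence and
   uniqueness of decompositions), B_0 = k, and B is generated as a
   k-algebra by finitely many elements of B_1. *)

Definition alg_gen (S : seq B) : B -> Prop :=
  fun y => exists p : {mpoly k[size S]},
    y = mmap (fun c : k => c%:A) (fun i : 'I_(size S) => S`_i) p.

Definition standard_graded (G : nat -> B -> Prop) : Prop :=
  (forall i, G i 0 /\ (forall a u v, G i u -> G i v -> G i (a *: u + v))) /\
      (forall i j u v, G i u -> G j v -> G (i + j)%N (u * v)) /\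
      (forall y, exists n (c : 'I_n -> B),
          (forall i : 'I_n, G i (c i)) /\ y = \sum_(i < n) c i) /\
      (forall n (c : 'I_n -> B), (forall i : 'I_n, G i (c i)) ->
          \sum_(i < n) c i = 0 -> forall i, c i = 0) /\
      (forall y, G 0%N y <-> exists a : k, y = a%:A) /\
      (exists S : seq B, (forall z, z \in S -> G 1%N z) /\
          forall y, alg_gen S y).

Definition hmax (G : nat -> B -> Prop) : B -> Prop :=
  fun y => exists n (c : 'I_n -> B),
    (forall i : 'I_n, G (i.+1) (c i)) /\ y = \sum_(i < n) c i.

Definition ideal_gen (S : seq B) : B -> Prop :=
  fun y => exists c : 'I_(size S) -> B, y = \sum_(i < size S) c i * S`_i.

Definition ideal_add (I J : B -> Prop) : B -> Prop :=
  fun y => exists a b, I a /\ J b /\ y = a + b.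

Definition ideal_mul (I J : B -> Prop) : B -> Prop :=
  fun y => exists n (a b : 'I_n -> B),
    (forall i, I (a i)) /\ (forall i, J (b i)) /\ y = \sum_(i < n) a i * b i.

Fixpoint ideal_pow (I : B -> Prop) (n : nat) : B -> Prop :=
  match n with
  | 0%N => fun _ => True
  | n'.+1 => ideal_mul I (ideal_pow I n')
  end.

Definition is_ideal (I : B -> Prop) : Prop :=
  I 0 /\ (forall u v, I u -> I v -> I (u + v)) /\ (forall r u, I u -> I (r * u)).

Definition prime_ideal (P : B -> Prop) : Prop :=
  is_ideal P /\ ~ P 1 /\ (forall u v, P (u * v) -> P u \/ P v).

Definition prime_chain (P : nat -> B -> Prop) (e : nat) : Prop :=
  (forall i, (i <= e)%N -> prime_ideal (P i)) /\
  (forall i, (i < e)%N -> (forall y, P i y -> P i.+1 y) /\ exists y, P i.+1 y /\ ~ P i y).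

Definition krull_dim (d : nat) : Prop :=
  (exists P, prime_chain P d) /\ (forall P e, prime_chain P e -> (e <= d)%N).

(* B / A is a finite module over the subring R of A (A, R subsets of B):
   there are finitely many b_j with B = sum_j R b_j + A *)
Definition quot_finite_over (R A : B -> Prop) : Prop :=
  exists bs : seq B, forall y, exists (c : 'I_(size bs) -> B) (a : B),
    (forall j, R (c j)) /\ A a /\ y = \sum_(j < size bs) c j * bs`_j + a.

End Defs.

(* Write X1 = x_1..x_(d-1), X2 = x_d..x_(d+s) and J_n = (X1) m^(n-1) + (X2)^n,
   which is always contained in m^n.  Both directions are degree arguments on
   homogeneous components.

   If B = sum_j k[X1] b_j + k[X1, X2] with every b_j of degree < D, let n > D
   and z be homogeneous of degree i >= n.  In a product r b_j the degree-0
   part of r contributes nothing in degree i, and the positive-degree parts of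
   r lie in (X1), so r b_j has its degree-i part in (X1) m^(n-1).  The
   degree-i part of an element of k[X1, X2] is a combination of monomials of
   degree i, each of which lies in (X1) m^(n-1) or is a monomial in X2, hence
   in (X2)^n.  So m^n = J_n.

   Conversely, if m^n = J_n for all n > N, induction on the degree shows that
   every homogeneous element lies in sum_b k[X1] b + k[X1, X2], with b ranging
   over the monomials of degree <= N in generators of B: in degree n > N, the
   degree-n part of an element of J_n is sum_l x_l y_l with x_l in X1 and
   deg y_l = n - 1, plus a form in k[X2]. *)

From HB Require Import structures.
From mathcomp Require Import all_boot all_order all_algebra.
From mathcomp Require Import mpoly.
From Stdlib Require Import ClassicalEpsilon.
From mathcomp Require Import zify.
Import GRing.Theory.
Local Open Scope ring_scope.
Set Implicit Arguments. Unset Strict Implicit.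

Section Ideals.
Variables (k : fieldType) (B : comAlgType k).
Implicit Types (I J : B -> Prop) (L : seq B).

Lemma ideal_sum I n (F : 'I_n -> B) :
  is_ideal I -> (forall i, I (F i)) -> I (\sum_(i < n) F i).
Proof. by move=> [I0 [ID _]] IF; elim/big_ind: _. Qed.

Lemma ideal_mul_mem I J a b : I a -> J b -> ideal_mul I J (a * b).
Proof. by move=> Ia Jb; exists 1%N, (fun=> a), (fun=> b); rewrite big_ord1. Qed.

Lemma ideal_mul_is_ideal I J : is_ideal I -> is_ideal (ideal_mul I J).
Proof.
move=> [_ [_ IM]]; split; [|split].
- by exists 0%N, (fun=> 0), (fun=> 0); do 2!split=> [[]//|]; rewrite big_ord0.
- move=> _ _ [n1 [a1 [b1 [Ia1 [Jb1 ->]]]]] [n2 [a2 [b2 [Ia2 [Jb2 ->]]]]].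
  exists (n1 + n2)%N,
    (fun i : 'I_(n1 + n2) => match split i with inl j => a1 j | inr j => a2 j end),
    (fun i : 'I_(n1 + n2) => match split i with inl j => b1 j | inr j => b2 j end).
  split; [by move=> i; case: split | split; first by move=> i; case: split].
  rewrite big_split_ord; congr (_ + _); apply: eq_bigr => i _.
    by rewrite (unsplitK (inl _ i)).
  by rewrite (unsplitK (inr _ i)).
- move=> r _ [n [a [b [Ia [Jb ->]]]]]; exists n, (fun i => r * a i), b.
  split=> [i|]; first exact: IM.
  by split=> //; rewrite mulr_sumr; apply: eq_bigr => i _; rewrite mulrA.
Qed.

Lemma ideal_mul_mono I J I' J' y :
  (forall z, I z -> I' z) -> (forall z, J z -> J' z) ->
  ideal_mul I J y -> ideal_mul I' J' y.
Proof.
move=> II' JJ' [n [a [b [Ia [Jb ->]]]]].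
by exists n, a, b; split=> [i|]; [apply: II' | split=> // i; apply: JJ'].
Qed.

Lemma ideal_pow_is_ideal I n : is_ideal I -> is_ideal (ideal_pow I n).
Proof. by case: n => [|n] II //=; apply: ideal_mul_is_ideal. Qed.

Lemma ideal_pow_mono I J n y :
  (forall z, I z -> J z) -> ideal_pow I n y -> ideal_pow J n y.
Proof. by move=> IJ; elim: n y => [|n IH] //= y; apply: ideal_mul_mono. Qed.

Lemma ideal_powD I a b u v : is_ideal I ->
  ideal_pow I a u -> ideal_pow I b v -> ideal_pow I (a + b) (u * v).
Proof.
move=> II; elim: a u => [|a IH] u /=.
  by move=> _ Iv; have [_ [_ IM]] := ideal_pow_is_ideal b II; apply: IM.
move=> [n [c [e [Ic [Ie ->]]]]] Iv; rewrite mulr_suml.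
apply: ideal_sum; first exact: ideal_mul_is_ideal.
by move=> i; rewrite -mulrA; apply: ideal_mul_mem => //; apply: IH.
Qed.

Lemma ideal_pow_antimono I n m y : is_ideal I -> (n <= m)%N ->
  ideal_pow I m y -> ideal_pow I n y.
Proof.
move=> II /subnK <-; rewrite addnC; elim: (m - n)%N y => [|l IH] y.
  by rewrite addn0.
rewrite addnS => -[p [c [e [_ [Ie ->]]]]].
apply: ideal_sum; first exact: ideal_pow_is_ideal.
have [_ [_ IM]] := ideal_pow_is_ideal (n + l) II.
by move=> i; apply: IH; apply: IM; apply: Ie.
Qed.

Lemma ideal_add_is_ideal I J : is_ideal I -> is_ideal J -> is_ideal (ideal_add I J).
Proof.
move=> [I0 [ID IM]] [J0 [JD JM]]; split; [|split].
- by exists 0, 0; rewrite addr0.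
- move=> _ _ [a1 [b1 [Ia1 [Jb1 ->]]]] [a2 [b2 [Ia2 [Jb2 ->]]]].
  by exists (a1 + a2), (b1 + b2); rewrite addrACA; split; [|split]; auto.
- move=> r _ [a [b [Ia [Jb ->]]]].
  by exists (r * a), (r * b); rewrite mulrDr; split; [|split]; auto.
Qed.

Lemma ideal_gen_is_ideal L : is_ideal (ideal_gen L).
Proof.
split; [|split].
- by exists (fun=> 0); rewrite big1 // => i _; rewrite mul0r.
- move=> _ _ [c1 ->] [c2 ->]; exists (fun i => c1 i + c2 i).
  by rewrite -big_split; apply: eq_bigr => i _; rewrite mulrDl.
- move=> r _ [c ->]; exists (fun i => r * c i).
  by rewrite mulr_sumr; apply: eq_bigr => i _; rewrite mulrA.
Qed.

Lemma mem_ideal_gen L z : z \in L -> ideal_gen L z.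
Proof.
move=> Lz; have iz : (index z L < size L)%N by rewrite index_mem.
exists (fun i => (i == Ordinal iz)%:R).
rewrite (bigD1 (Ordinal iz)) //= eqxx mul1r nth_index // big1 ?addr0 //.
by move=> i /negbTE ->; rewrite mul0r.
Qed.

Lemma alg_gen_ind L (P : B -> Prop) :
  (forall u v, P u -> P v -> P (u + v)) ->
  (forall u v, P u -> P v -> P (u * v)) ->
  (forall a : k, P a%:A) ->
  (forall z, z \in L -> P z) ->
  forall y, alg_gen L y -> P y.
Proof.
move=> PD PM PA PL y [p ->]; rewrite /mmap.
have P0 : P 0 by rewrite -(scale0r 1); apply: PA.
have P1 : P 1 by rewrite -(scale1r 1); apply: PA.
apply: (big_ind P) => // m _; apply: (PM); first exact: PA.
rewrite /mmap1; apply: (big_ind P) => // i _; elim: (m i) => [|e IH]; first by rewrite expr0.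
by rewrite exprS; apply: (PM) => //; apply: PL; apply: mem_nth.
Qed.

Lemma alg_genD L u v : alg_gen L u -> alg_gen L v -> alg_gen L (u + v).
Proof.
by move=> [p ->] [q ->]; exists (p + q);
  rewrite (rmorphD (mmap (GRing.in_alg B) (fun i => L`_i))).
Qed.

Lemma alg_genM L u v : alg_gen L u -> alg_gen L v -> alg_gen L (u * v).
Proof.
by move=> [p ->] [q ->]; exists (p * q);
  rewrite (rmorphM (mmap (GRing.in_alg B) (fun i => L`_i))).
Qed.

Lemma alg_gen_scalar L (a : k) : alg_gen L a%:A.
Proof. by exists a%:MP; rewrite (mmapC (fun i => L`_i) (GRing.in_alg B)). Qed.

Lemma alg_gen0 L : alg_gen L 0.
Proof. by rewrite -(scale0r 1); apply: alg_gen_scalar. Qed.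

Lemma alg_gen1 L : alg_gen L 1.
Proof. by rewrite -(scale1r 1); apply: alg_gen_scalar. Qed.

Lemma alg_gen_sum L n (F : 'I_n -> B) :
  (forall i, alg_gen L (F i)) -> alg_gen L (\sum_(i < n) F i).
Proof. by move=> LF; elim/big_ind: _ => //; [apply: alg_gen0 | apply: alg_genD]. Qed.

Lemma mem_alg_gen L z : z \in L -> alg_gen L z.
Proof.
move=> Lz; have iz : (index z L < size L)%N by rewrite index_mem.
by exists 'X_(Ordinal iz); rewrite (mmapX (fun i => L`_i) (GRing.in_alg B)) mmap1U nth_index.
Qed.

Lemma alg_gen_sub L M y :
  (forall z, z \in L -> z \in M) -> alg_gen L y -> alg_gen M y.
Proof.
move=> LM; apply: alg_gen_ind; [exact: alg_genD | exact: alg_genM |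
  exact: alg_gen_scalar | by move=> z /LM; apply: mem_alg_gen].
Qed.

End Ideals.

Section QuotSpan.
Variables (k : fieldType) (B : comAlgType k) (L1 L2 : seq B).

Definition quot_span (bs : seq B) (y : B) : Prop :=
  exists (c : 'I_(size bs) -> B) (a : B), (forall j, alg_gen L1 (c j)) /\
    alg_gen L2 a /\ y = \sum_(j < size bs) c j * bs`_j + a.

Variable bs : seq B.

Lemma quot_spanD u v : quot_span bs u -> quot_span bs v -> quot_span bs (u + v).
Proof.
move=> [c1 [a1 [Lc1 [La1 ->]]]] [c2 [a2 [Lc2 [La2 ->]]]].
exists (fun j => c1 j + c2 j), (a1 + a2); split=> [j|]; first exact: alg_genD.
split; first exact: alg_genD.
by rewrite addrACA -big_split; congr (_ + _); apply: eq_bigr => j _; rewrite mulrDl.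
Qed.

Lemma quot_span_alg a : alg_gen L2 a -> quot_span bs a.
Proof.
move=> La; exists (fun=> 0), a; split=> [j|]; first exact: alg_gen0.
by split=> //; rewrite big1 ?add0r // => j _; rewrite mul0r.
Qed.

Lemma quot_span_sum n (F : 'I_n -> B) :
  (forall i, quot_span bs (F i)) -> quot_span bs (\sum_(i < n) F i).
Proof.
move=> SF; apply: (big_ind (quot_span bs)) => //; last exact: quot_spanD.
exact/quot_span_alg/alg_gen0.
Qed.

Lemma quot_spanMl r y : alg_gen L1 r -> alg_gen L2 r ->
  quot_span bs y -> quot_span bs (r * y).
Proof.
move=> L1r L2r [c [a [Lc [La ->]]]].
exists (fun j => r * c j), (r * a); split=> [j|]; first exact: alg_genM.
split; first exact: alg_genM.
by rewrite mulrDr mulr_sumr; congr (_ + _); apply: eq_bigr => j _; rewrite mulrA.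
Qed.

Lemma quot_span_mem z : z \in bs -> quot_span bs z.
Proof.
move=> bz; have iz : (index z bs < size bs)%N by rewrite index_mem.
exists (fun j => (j == Ordinal iz)%:R), 0; split=> [j|]; first by case: eqP => _;
  [exact: alg_gen1 | exact: alg_gen0].
split; first exact: alg_gen0.
rewrite addr0 (bigD1 (Ordinal iz)) //= eqxx mul1r nth_index // big1 ?addr0 //.
by move=> j /negbTE ->; rewrite mul0r.
Qed.

End QuotSpan.

Section Graded.
Variables (k : fieldType) (B : comAlgType k) (G : nat -> B -> Prop).
Hypothesis HG : standard_graded G.

Lemma homog0 i : G i 0.
Proof. by case: HG => H _; case: (H i). Qed.

Lemma homogD i u v : G i u -> G i v -> G i (u + v).
Proof.
case: HG => H _ Gu Gv; have [_ GZD] := H i.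
by have := GZD 1 u v Gu Gv; rewrite scale1r.
Qed.

Lemma homogZ i a u : G i u -> G i (a *: u).
Proof.
case: HG => H _ Gu; have [_ GZD] := H i.
by have := GZD a u 0 Gu (homog0 i); rewrite addr0.
Qed.

Lemma homogB i u v : G i u -> G i v -> G i (u - v).
Proof. by move=> Gu Gv; apply: homogD => //; rewrite -scaleN1r; apply: homogZ. Qed.

Lemma homogM i j u v : G i u -> G j v -> G (i + j) (u * v).
Proof. by case: HG => _ [H _]; apply: H. Qed.

Lemma homog_scalar a : G 0 a%:A.
Proof. by case: HG => _ [_ [_ [_ [H _]]]]; apply/H; exists a. Qed.

Lemma homog0_scalar y : G 0 y -> exists a : k, y = a%:A.
Proof. by case: HG => _ [_ [_ [_ [H _]]]] /H. Qed.

Lemma homog1 : G 0 1.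
Proof. by rewrite -(scale1r 1); apply: homog_scalar. Qed.

Definition hdecomp (f : nat -> B) (n : nat) (y : B) : Prop :=
  (forall j, G j (f j)) /\ (forall j, (n <= j)%N -> f j = 0) /\ y = \sum_(j < n) f j.

Lemma hdecomp_widen f n m y : (n <= m)%N -> hdecomp f n y -> hdecomp f m y.
Proof.
move=> nm [Gf [f0 ->]]; split=> //; split=> [j mj|]; first by apply/f0/(leq_trans nm).
rewrite (big_ord_widen m f nm) big_mkcond; apply: eq_bigr => i _.
by case: ifP => // /negbT; rewrite -leqNgt => /f0 ->.
Qed.

Lemma hdecomp_uniq f g n m y : hdecomp f n y -> hdecomp g m y -> f =1 g.
Proof.
move=> /(hdecomp_widen (leq_maxl n m)) [Gf [f0 Ef]].
move=> /(hdecomp_widen (leq_maxr n m)) [Gg [g0 Eg]] j.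
have [jnm|nmj] := ltnP j (maxn n m); last by rewrite f0 ?g0.
case: HG => _ [_ [_ [Huniq _]]].
have sum0 : \sum_(i < maxn n m) (f i - g i) = 0 by rewrite sumrB -Ef -Eg subrr.
have := Huniq _ _ (fun i => homogB (Gf i) (Gg i)) sum0 (Ordinal jnm).
by move/eqP; rewrite subr_eq0 => /eqP.
Qed.

Lemma hdecomp_exists y : exists f n, hdecomp f n y.
Proof.
case: HG => _ [_ [Hex _]]; have [n [c [Gc ->]]] := Hex y.
exists (fun j => if insub j is Some i then c i else 0), n; split; [|split].
- by move=> j; case: insubP => [i _ <-|_]; [apply: Gc | apply: homog0].
- by move=> j nj; case: insubP => [i /=|//]; rewrite ltnNge nj.
- by apply: eq_bigr => i _; rewrite valK.
Qed.

(* By hdecomp_uniq the choice made here is irrelevant. *)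
Definition hcomp (y : B) : nat -> B :=
  proj1_sig (constructive_indefinite_description _ (hdecomp_exists y)).

Lemma hcomp_hdecomp y : exists n, hdecomp (hcomp y) n y.
Proof. exact: proj2_sig (constructive_indefinite_description _ (hdecomp_exists y)). Qed.

Lemma hcompE f n y : hdecomp f n y -> hcomp y =1 f.
Proof. by move=> fy; have [m hy] := hcomp_hdecomp y; apply: hdecomp_uniq hy fy. Qed.

Lemma homog_hcomp y j : G j (hcomp y j).
Proof. by have [n [Gy _]] := hcomp_hdecomp y. Qed.

Lemma hcompD y z j : hcomp (y + z) j = hcomp y j + hcomp z j.
Proof.
have [n1 hy] := hcomp_hdecomp y; have [n2 hz] := hcomp_hdecomp z.
have [Gy [y0 Ey]] := hdecomp_widen (leq_maxl n1 n2) hy.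
have [Gz [z0 Ez]] := hdecomp_widen (leq_maxr n1 n2) hz.
apply: (@hcompE (fun j => hcomp y j + hcomp z j) (maxn n1 n2)); split; [|split].
- by move=> i; apply: homogD.
- by move=> i hi; rewrite y0 ?z0 ?addr0.
- by rewrite big_split -Ey -Ez.
Qed.

Lemma hcomp0 j : hcomp 0 j = 0.
Proof.
apply: (@hcompE (fun=> 0) 0); split=> [i|]; first exact: homog0.
by split=> //; rewrite big_ord0.
Qed.

Lemma hcomp_sum n (F : 'I_n -> B) j :
  hcomp (\sum_(i < n) F i) j = \sum_(i < n) hcomp (F i) j.
Proof.
elim: n F => [|n IH] F; first by rewrite !big_ord0 hcomp0.
by rewrite !big_ord_recr hcompD IH.
Qed.

Lemma hcomp_homog i z j : G i z -> hcomp z j = if j == i then z else 0.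
Proof.
move=> Gz; apply: (@hcompE (fun j => if j == i then z else 0) i.+1); split; [|split].
- by move=> l; case: eqP => [->|_] //; apply: homog0.
- by move=> l il; case: eqP => // li; rewrite li ltnn in il.
- rewrite big_ord_recr /= eqxx big1 ?add0r // => l _.
  by rewrite (ltn_eqF (ltn_ord l)).
Qed.

Lemma hcomp_homog_id i z : G i z -> hcomp z i = z.
Proof. by move=> Gz; rewrite (hcomp_homog _ Gz) eqxx. Qed.

Lemma hcompMl m h w j : G m h ->
  hcomp (h * w) j = if (m <= j)%N then h * hcomp w (j - m) else 0.
Proof.
move=> Gh; have [n [Gw [w0 Ew]]] := hcomp_hdecomp w.
apply: (@hcompE (fun j => if (m <= j)%N then h * hcomp w (j - m) else 0) (m + n)).
split; [|split].
- move=> l; case: ifP => ml; last exact: homog0.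
  by have := homogM Gh (Gw (l - m)%N); rewrite subnKC.
- move=> l mnl; have ml : (m <= l)%N by apply: leq_trans mnl; apply: leq_addr.
  by rewrite ml w0 ?mulr0 // leq_subRL.
- rewrite big_split_ord /= big1 ?add0r => [|i _]; last by rewrite leqNgt ltn_ord.
  rewrite {1}Ew mulr_sumr; apply: eq_bigr => i _.
  by rewrite leq_addr addKn.
Qed.

Lemma hcompM u v j : exists n, hcomp (u * v) j =
  \sum_(a < n) (if (a <= j)%N then hcomp u a * hcomp v (j - a) else 0).
Proof.
have [n [_ [_ Eu]]] := hcomp_hdecomp u; exists n.
rewrite {1}Eu mulr_suml hcomp_sum; apply: eq_bigr => i _.
exact/hcompMl/homog_hcomp.
Qed.

Lemma hcomp_bounded (s : seq B) :
  exists D, forall z, z \in s -> forall i, (D <= i)%N -> hcomp z i = 0.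
Proof.
elim: s => [|z s [D sD]]; first by exists 0%N.
have [n [_ [z0 _]]] := hcomp_hdecomp z.
exists (maxn n D) => w; rewrite inE => /orP [/eqP ->|sw] i nDi.
  by apply/z0/(leq_trans _ nDi)/leq_maxl.
by apply/sD/(leq_trans _ nDi)/leq_maxr.
Qed.

Lemma hmaxE y : hmax G y <-> hcomp y 0 = 0.
Proof.
split=> [[n [c [Gc ->]]]|y0].
  by rewrite hcomp_sum big1 // => i _; rewrite (hcomp_homog _ (Gc i)).
have [n /(hdecomp_widen (leqnSn n)) [_ [_ Ey]]] := hcomp_hdecomp y.
exists n, (fun i : 'I_n => hcomp y i.+1); split=> [i|]; first exact: homog_hcomp.
by rewrite {1}Ey big_ord_recl y0 add0r; apply: eq_bigr => i _; rewrite lift0.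
Qed.

Lemma hmax_is_ideal : is_ideal (hmax G).
Proof.
split; [|split].
- by apply/hmaxE; rewrite hcomp0.
- by move=> u v /hmaxE u0 /hmaxE v0; apply/hmaxE; rewrite hcompD u0 v0 addr0.
- move=> r u /hmaxE u0; apply/hmaxE; have [n ->] := hcompM r u 0.
  apply: big1 => i _; case: ifP => //; rewrite leqn0 => /eqP ->.
  by rewrite subnn u0 mulr0.
Qed.

Lemma homog1_hmax z : G 1 z -> hmax G z.
Proof. by move=> Gz; apply/hmaxE; rewrite (hcomp_homog _ Gz). Qed.

Lemma ideal_gen_sub_hmax (L : seq B) y :
  (forall z, z \in L -> G 1 z) -> ideal_gen L y -> hmax G y.
Proof.
move=> GL [c ->]; apply: ideal_sum => [|l]; first exact: hmax_is_ideal.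
have [_ [_ HM]] := hmax_is_ideal.
by apply/HM/homog1_hmax/GL/mem_nth.
Qed.

Lemma hcomp_hmax_pow n y j :
  ideal_pow (hmax G) n y -> (j < n)%N -> hcomp y j = 0.
Proof.
elim: n y j => [|n IH] //= y j [m [a [b [Ma [Mb ->]]]]] jn.
rewrite hcomp_sum big1 // => i _; have [l ->] := hcompM (a i) (b i) j.
apply: big1 => e _; case: ifP => // ej.
have [->|e_gt0] := posnP e; first by move: (Ma i) => /hmaxE ->; rewrite mul0r.
by rewrite (IH _ _ (Mb i)) ?mulr0 //; lia.
Qed.


Section Monomials.
Variable S : seq B.
Hypothesis S_lin : forall z, z \in S -> G 1 z.
Hypothesis S_gen : forall y, alg_gen S y.

Fixpoint monomials (j : nat) : seq B :=
  if j is j'.+1 then [seq s * w | s <- S, w <- monomials j'] else [:: 1].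

Inductive kspan (P : B -> Prop) : B -> Prop :=
| kspan0 : kspan P 0
| kspan_mem x : P x -> kspan P x
| kspanD x y : kspan P x -> kspan P y -> kspan P (x + y)
| kspanZ (a : k) x : kspan P x -> kspan P (a *: x).

Definition monomial_span j := kspan (fun w => w \in monomials j).

Lemma kspan_sum P n (F : 'I_n -> B) :
  (forall i, kspan P (F i)) -> kspan P (\sum_(i < n) F i).
Proof. by move=> PF; apply: (big_ind (kspan P)) => //; [apply: kspan0 | apply: kspanD]. Qed.

Lemma monomialsM a b u v :
  u \in monomials a -> v \in monomials b -> u * v \in monomials (a + b).
Proof.
elim: a u => [|a IH] u /=; first by rewrite mem_seq1 => /eqP -> bv; rewrite mul1r.
case/allpairsP => -[s w] /= [Ss wa ->] bv; rewrite -mulrA.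
by apply: allpairs_f => //; apply: IH.
Qed.

Lemma monomial_spanM a b u v :
  monomial_span a u -> monomial_span b v -> monomial_span (a + b) (u * v).
Proof.
move=> Su Sv; elim: Su => [|x ax|x z _ Sx _ Sz|c x _ Sx].
- by rewrite mul0r; apply: kspan0.
- elim: Sv => [|y yb|y z _ Sy _ Sz|c y _ Sy].
  + by rewrite mulr0; apply: kspan0.
  + by apply: kspan_mem; apply: monomialsM.
  + by rewrite mulrDr; apply: kspanD.
  + by rewrite -scalerAr; apply: kspanZ.
- by rewrite mulrDl; apply: kspanD.
- by rewrite -scalerAl; apply: kspanZ.
Qed.

Lemma monomial_hmax_pow j n w : (n <= j)%N ->
  w \in monomials j -> ideal_pow (hmax G) n w.
Proof.
elim: n j w => [|n IH] [|j] //= w nj.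
case/allpairsP => -[s w'] /= [Ss w'j ->].
exact: ideal_mul_mem (homog1_hmax (S_lin Ss)) (IH j _ nj w'j).
Qed.

Lemma monomial_span_hmax_pow j n y : (n <= j)%N ->
  monomial_span j y -> ideal_pow (hmax G) n y.
Proof.
move=> nj; have [I0 [ID IM]] := ideal_pow_is_ideal n (hmax_is_ideal).
elim=> [|w /monomial_hmax_pow|x z _ Ix _ Iz|c x _ Ix]; auto.
by rewrite -mulr_algl; apply: IM.
Qed.

Lemma hcomp_monomial_span y j : monomial_span j (hcomp y j).
Proof.
move: y (S_gen y) j.
apply: (alg_gen_ind (P := fun y => forall j, monomial_span j (hcomp y j))).

- by move=> u v Su Sv j; rewrite hcompD; apply: kspanD (Su j) (Sv j).
- move=> u v Su Sv j; have [n ->] := hcompM u v j.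
  apply: kspan_sum => i; case: ifP => ij; last exact: kspan0.
  by have := monomial_spanM (Su i) (Sv (j - i)%N); rewrite subnKC.
- move=> a j; rewrite (hcomp_homog _ (homog_scalar a)).
  case: eqP => [->|_]; last exact: kspan0.
  by rewrite -(mulr1 a%:A) mulr_algl; apply/kspanZ/kspan_mem; rewrite inE.
- move=> z Sz j; rewrite (hcomp_homog _ (S_lin Sz)).
  case: eqP => [->|_]; last exact: kspan0.
  by apply: kspan_mem; rewrite -[z]mulr1; apply: allpairs_f => //; rewrite inE.
Qed.

End Monomials.

Lemma homog_hmax_pow n m z : (m <= n)%N -> G n z -> ideal_pow (hmax G) m z.
Proof.
case: HG => _ [_ [_ [_ [_ [S [S_lin S_gen]]]]]] mn Gz.
apply: (monomial_span_hmax_pow S_lin mn).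
by rewrite -(hcomp_homog_id Gz); apply: hcomp_monomial_span.
Qed.

Section LinearForms.
Variable L : seq B.
Hypothesis L_lin : forall z, z \in L -> G 1 z.

Definition homog_ideal_gen (a : nat) (u : B) : Prop :=
  if a is a'.+1 then exists r : 'I_(size L) -> B,
    (forall l, G a' (r l)) /\ u = \sum_l r l * L`_l
  else u = 0.

Lemma homog_ideal_gen0 a : homog_ideal_gen a 0.
Proof.
case: a => [|a] //=; exists (fun=> 0); split=> [l|]; first exact: homog0.
by rewrite big1 // => l _; rewrite mul0r.
Qed.

Lemma homog_ideal_genD a u v :
  homog_ideal_gen a u -> homog_ideal_gen a v -> homog_ideal_gen a (u + v).
Proof.
case: a => [-> ->|a [r1 [Gr1 ->]] [r2 [Gr2 ->]]] /=; first by rewrite addr0.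
exists (fun l => r1 l + r2 l); split=> [l|]; first exact: homogD.
by rewrite -big_split; apply: eq_bigr => l _; rewrite mulrDl.
Qed.

Lemma homog_ideal_gen_sum a n (F : 'I_n -> B) :
  (forall i, homog_ideal_gen a (F i)) -> homog_ideal_gen a (\sum_(i < n) F i).
Proof.
move=> HF; apply: (big_ind (homog_ideal_gen a)) => //.
  exact: homog_ideal_gen0.
exact: homog_ideal_genD.
Qed.

Lemma homog_ideal_genMl a j w u :
  G j w -> homog_ideal_gen a u -> homog_ideal_gen (j + a) (w * u).
Proof.
case: a => [|a] Gw /=; first by move=> ->; rewrite mulr0 addn0; apply: homog_ideal_gen0.
move=> [r [Gr ->]]; rewrite addnS; exists (fun l => w * r l); split=> [l|].
  exact: homogM.
by rewrite mulr_sumr; apply: eq_bigr => l _; rewrite mulrA.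
Qed.

Lemma homog_ideal_gen_mem z : z \in L -> homog_ideal_gen 1 z.
Proof.
move=> Lz; have iz : (index z L < size L)%N by rewrite index_mem.
exists (fun l => (l == Ordinal iz)%:R); split=> [l|].
  by case: eqP => _; [apply: homog1 | apply: homog0].
rewrite (bigD1 (Ordinal iz)) //= eqxx mul1r nth_index // big1 ?addr0 //.
by move=> l /negbTE ->; rewrite mul0r.
Qed.

Lemma homog_ideal_gen_mul n i u : (0 < n)%N -> (n <= i)%N ->
  homog_ideal_gen i u -> ideal_mul (ideal_gen L) (ideal_pow (hmax G) n.-1) u.
Proof.
case: i => [|i] n_gt0 ni; first by rewrite leqn0 in ni; move/eqP: ni n_gt0 => ->.
move=> [r [Gr ->]]; exists (size L), (fun l => L`_l), r.
split=> [l|]; first exact/mem_ideal_gen/mem_nth.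
split=> [l|]; last by apply: eq_bigr => l _; rewrite mulrC.
by apply: homog_hmax_pow (Gr l); rewrite -ltnS prednK.
Qed.

(* Stable under products since the degree-a part of u v is
   sum_e u_e v_(a-e), and one of e, a - e is positive. *)
Lemma hcomp_alg_gen c a : alg_gen L c -> (0 < a)%N ->
  homog_ideal_gen a (hcomp c a).
Proof.
move=> Lc; move: c Lc a; apply: (alg_gen_ind (P := fun c => forall a, (0 < a)%N ->
  homog_ideal_gen a (hcomp c a))).
- by move=> u v Hu Hv a a_gt0; rewrite hcompD; apply: homog_ideal_genD; auto.
- move=> u v Hu Hv a a_gt0; have [n ->] := hcompM u v a.
  apply: homog_ideal_gen_sum => i; case: ifP => ia; last exact: homog_ideal_gen0.
  have [->|i_gt0] := posnP i.
    by rewrite subn0; have := homog_ideal_genMl (homog_hcomp u 0) (Hv a a_gt0).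
  have := homog_ideal_genMl (homog_hcomp v (a - i)) (Hu i i_gt0).
  by rewrite subnK // mulrC.
- move=> a j j_gt0; rewrite (hcomp_homog _ (homog_scalar a)).
  by case: eqP j_gt0 => [->|_ _] //; apply: homog_ideal_gen0.
- move=> z Lz j _; rewrite (hcomp_homog _ (L_lin Lz)).
  by case: eqP => [->|_]; [apply: homog_ideal_gen_mem | apply: homog_ideal_gen0].
Qed.

Lemma hcomp_ideal_pow_gen n v :
  ideal_pow (ideal_gen L) n v -> alg_gen L (hcomp v n).
Proof.
elim: n v => [|n IH] v /=.
  by move=> _; have [a ->] := homog0_scalar (homog_hcomp v 0); apply: alg_gen_scalar.
move=> [m [a [b [La [Lb ->]]]]]; rewrite hcomp_sum; apply: alg_gen_sum => i.
have [c ->] := La i; rewrite mulr_suml hcomp_sum; apply: alg_gen_sum => l.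
have Ll : L`_l \in L by apply: mem_nth.
have [_ [_ IM]] := ideal_pow_is_ideal n (ideal_gen_is_ideal L).
rewrite mulrAC mulrC (hcompMl _ _ (L_lin Ll)) subn1 /=.
by apply: alg_genM; [apply: mem_alg_gen | apply/IH/IM].
Qed.

End LinearForms.

Section Split.
Variables X1 X2 : seq B.
Hypothesis X1_lin : forall z, z \in X1 -> G 1 z.
Hypothesis X2_lin : forall z, z \in X2 -> G 1 z.

Definition split_ideal (n : nat) : B -> Prop :=
  ideal_add (ideal_mul (ideal_gen X1) (ideal_pow (hmax G) n.-1))
    (ideal_pow (ideal_gen X2) n).

Definition split_homog (a : nat) (z : B) : Prop := exists u v,
  homog_ideal_gen X1 a u /\ ideal_pow (ideal_gen X2) a v /\ G a v /\ z = u + v.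

Lemma split_ideal_is_ideal n : is_ideal (split_ideal n).
Proof.
apply: ideal_add_is_ideal; first exact/ideal_mul_is_ideal/ideal_gen_is_ideal.
exact/ideal_pow_is_ideal/ideal_gen_is_ideal.
Qed.

Lemma split_ideal_hmax_pow n y : (0 < n)%N ->
  split_ideal n y -> ideal_pow (hmax G) n y.
Proof.
move=> n_gt0 [u [v [Iu [Iv ->]]]].
have [_ [ID _]] := ideal_pow_is_ideal n hmax_is_ideal; apply: ID.
  rewrite -(prednK n_gt0); apply: ideal_mul_mono Iu => // z.
  exact: ideal_gen_sub_hmax.
by apply: ideal_pow_mono Iv => z; apply: ideal_gen_sub_hmax.
Qed.

Lemma split_homog0 a : split_homog a 0.
Proof.
exists 0, 0; split; first exact: homog_ideal_gen0.
split; first exact: (ideal_pow_is_ideal a (ideal_gen_is_ideal X2)).1.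
by split; [apply: homog0 | rewrite addr0].
Qed.

Lemma split_homogD a z1 z2 :
  split_homog a z1 -> split_homog a z2 -> split_homog a (z1 + z2).
Proof.
move=> [u1 [v1 [Iu1 [Iv1 [Gv1 ->]]]]] [u2 [v2 [Iu2 [Iv2 [Gv2 ->]]]]].
exists (u1 + u2), (v1 + v2); split; first exact: homog_ideal_genD.
split; first exact: (ideal_pow_is_ideal a (ideal_gen_is_ideal X2)).2.1.
by split; [apply: homogD | rewrite addrACA].
Qed.

Lemma split_homog_sum a n (F : 'I_n -> B) :
  (forall i, split_homog a (F i)) -> split_homog a (\sum_(i < n) F i).
Proof.
move=> HF; apply: (big_ind (split_homog a)) => //; first exact: split_homog0.
exact: split_homogD.
Qed.

Lemma split_homogM a b z1 z2 : G b z2 ->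
  split_homog a z1 -> split_homog b z2 -> split_homog (a + b) (z1 * z2).
Proof.
move=> Gz2 [u1 [v1 [Iu1 [Iv1 [Gv1 ->]]]]] [u2 [v2 [Iu2 [Iv2 [Gv2 E2]]]]].
exists (z2 * u1 + v1 * u2), (v1 * v2); split.
  by apply: homog_ideal_genD; [rewrite addnC |]; apply: homog_ideal_genMl.
split; first exact: ideal_powD (ideal_gen_is_ideal X2) Iv1 Iv2.
split; first exact: homogM.
by rewrite mulrDl [u1 * _]mulrC E2 mulrDr addrA.
Qed.

Lemma homog_ideal_gen_split a u : homog_ideal_gen X1 a u -> split_homog a u.
Proof.
move=> Iu; exists u, 0; split=> //.
split; first exact: (ideal_pow_is_ideal a (ideal_gen_is_ideal X2)).1.
by split; [apply: homog0 | rewrite addr0].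
Qed.

Lemma split_homog_ideal n i z : (0 < n)%N -> (n <= i)%N ->
  split_homog i z -> split_ideal n z.
Proof.
move=> n_gt0 ni [u [v [Iu [Iv [_ ->]]]]]; exists u, v.
split; first exact: homog_ideal_gen_mul Iu.
by split=> //; apply: ideal_pow_antimono (ideal_gen_is_ideal X2) ni Iv.
Qed.

Lemma hcomp_alg_gen_cat c a : alg_gen (X1 ++ X2) c -> split_homog a (hcomp c a).
Proof.
move=> Lc; move: c Lc a.
apply: (alg_gen_ind (P := fun c => forall a, split_homog a (hcomp c a))).
- by move=> u v Hu Hv a; rewrite hcompD; apply: split_homogD.
- move=> u v Hu Hv a; have [n ->] := hcompM u v a.
  apply: split_homog_sum => i; case: ifP => ia; last exact: split_homog0.
  by have := split_homogM (homog_hcomp v (a - i)) (Hu i) (Hv _); rewrite subnKC.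
- move=> a j; rewrite (hcomp_homog _ (homog_scalar a)).
  case: eqP => [->|_]; last exact: split_homog0.
  exists 0, a%:A; do 3!split=> //; [apply: homog_scalar | by rewrite add0r].
- move=> z; rewrite mem_cat => /orP [X1z|X2z] a.
    rewrite (hcomp_homog _ (X1_lin X1z)); case: eqP => [->|_].
      exact/homog_ideal_gen_split/homog_ideal_gen_mem.
    exact: split_homog0.
  rewrite (hcomp_homog _ (X2_lin X2z)); case: eqP => [->|_]; last exact: split_homog0.
  exists 0, z; split; first exact: homog_ideal_gen0.
  split; first by rewrite -[z]mulr1; apply: ideal_mul_mem; [apply: mem_ideal_gen|].
  by split; [apply: X2_lin | rewrite add0r].
Qed.

Section FiniteQuotient.
Variables (bs : seq B) (D : nat).
Hypothesis bs_span : forall y, quot_span X1 (X1 ++ X2) bs y.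
Hypothesis bs_low : forall z, z \in bs -> forall i, (D <= i)%N -> hcomp z i = 0.

Lemma homog_split_ideal n i z : (D < n)%N -> (n <= i)%N -> G i z -> split_ideal n z.
Proof.
move=> Dn ni Gz; have n_gt0 : (0 < n)%N by lia.
have [c [a [X1c [Xa Ez]]]] := bs_span z.
rewrite -(hcomp_homog_id Gz) {1}Ez hcompD hcomp_sum.
have [_ [ID _]] := split_ideal_is_ideal n; apply: ID; last first.
  exact: split_homog_ideal n_gt0 ni (hcomp_alg_gen_cat _ Xa).
apply: ideal_sum => [|j]; first exact: split_ideal_is_ideal.
have [m ->] := hcompM (c j) bs`_j i.
apply: ideal_sum => [|e]; first exact: split_ideal_is_ideal.
have split0 := (split_ideal_is_ideal n).1.
case: ifP => ei //; have [->|e_gt0] := posnP e.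
  have bs_j : bs`_j \in bs by apply: mem_nth.
  by rewrite subn0 (bs_low bs_j) ?mulr0 //; lia.
apply: (split_homog_ideal n_gt0 ni); apply: homog_ideal_gen_split.
have := homog_ideal_genMl (homog_hcomp bs`_j (i - e)) (hcomp_alg_gen X1_lin (X1c j) e_gt0).
by rewrite subnK // mulrC.
Qed.

Lemma hmax_pow_split_ideal n y : (D < n)%N ->
  ideal_pow (hmax G) n y <-> split_ideal n y.
Proof.
move=> Dn; split; last by apply: split_ideal_hmax_pow; lia.
move=> My; have [m [_ [_ ->]]] := hcomp_hdecomp y.
apply: ideal_sum => [|j]; first exact: split_ideal_is_ideal.
have [jn|nj] := ltnP j n; last exact: homog_split_ideal Dn nj (homog_hcomp y j).
by rewrite (hcomp_hmax_pow My jn); apply: (split_ideal_is_ideal n).1.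
Qed.

End FiniteQuotient.

Lemma quot_finite_split_ideal :
  quot_finite_over (alg_gen X1) (alg_gen (X1 ++ X2)) ->
  exists N, forall n, (N < n)%N -> forall y,
    ideal_pow (hmax G) n y <-> split_ideal n y.
Proof.
move=> [bs bs_span]; have [D bs_low] := hcomp_bounded bs.
by exists D => n Dn y; apply: (hmax_pow_split_ideal bs_span bs_low).
Qed.

Section EventuallySplit.
Variable N : nat.
Hypothesis split_eventually :
  forall n, (N < n)%N -> forall y, ideal_pow (hmax G) n y -> split_ideal n y.
Variable S : seq B.
Hypothesis S_lin : forall z, z \in S -> G 1 z.
Hypothesis S_gen : forall y, alg_gen S y.

Definition low_monomials : seq B := flatten [seq monomials S j | j <- iota 0 N.+1].

Local Notation quot_low := (quot_span X1 (X1 ++ X2) low_monomials).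

Lemma monomial_span_quot_low j y : (j <= N)%N -> monomial_span S j y -> quot_low y.
Proof.
move=> jN; elim=> [|w Sw|u v _ Su _ Sv|a u _ Su].
- exact/quot_span_alg/alg_gen0.
- apply/quot_span_mem/flattenP; exists (monomials S j) => //.
  by apply/mapP; exists j; rewrite // mem_iota add0n ltnS.
- exact: quot_spanD.
- by rewrite -mulr_algl; apply: quot_spanMl => //; apply: alg_gen_scalar.
Qed.

Lemma homog_quot_low n z : G n z -> quot_low z.
Proof.
elim/ltn_ind: n z => n IH z Gz; rewrite -(hcomp_homog_id Gz).
have [nN|Nn] := leqP n N; first exact/(monomial_span_quot_low nN)/hcomp_monomial_span.
have [u [v [Iu [Iv ->]]]] := split_eventually Nn (homog_hmax_pow (leqnn n) Gz).
rewrite hcompD; apply: quot_spanD; last first.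
  apply/quot_span_alg/(alg_gen_sub (L := X2)); last exact: hcomp_ideal_pow_gen.
  by move=> x X2x; rewrite mem_cat X2x orbT.
move: Iu => [m [a [b [Ia [_ ->]]]]]; rewrite hcomp_sum; apply: quot_span_sum => i.
have [c ->] := Ia i; rewrite mulr_suml hcomp_sum; apply: quot_span_sum => l.
have X1l : X1`_l \in X1 by apply: mem_nth.
rewrite mulrAC mulrC (hcompMl _ _ (X1_lin X1l)) (_ : (1 <= n)%N); last by lia.
apply: quot_spanMl; first exact: mem_alg_gen.
  by apply: mem_alg_gen; rewrite mem_cat X1l.
by apply: (IH (n - 1)%N); [lia | apply: homog_hcomp].
Qed.

Lemma quot_low_all y : quot_low y.
Proof.
have [m [_ [_ ->]]] := hcomp_hdecomp y.
by apply: quot_span_sum => j; apply: (@homog_quot_low j); apply: homog_hcomp.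
Qed.

End EventuallySplit.

Lemma split_ideal_quot_finite :
  (exists N, forall n, (N < n)%N -> forall y,
    ideal_pow (hmax G) n y <-> split_ideal n y) ->
  quot_finite_over (alg_gen X1) (alg_gen (X1 ++ X2)).
Proof.
case: HG => _ [_ [_ [_ [_ [S [S_lin S_gen]]]]]] [N HN].
exists (low_monomials N S) => y.
by apply: (quot_low_all _ S_lin S_gen) => n Nn z /(HN n Nn).
Qed.

End Split.

End Graded.

Theorem lemma2p4 (k : fieldType) (B : comAlgType k) (G : nat -> B -> Prop)
    (d s : nat) (x : seq B) :
  standard_graded G -> krull_dim B d -> (0 < d)%N ->
  size x = (d + s)%N -> (forall z, z \in x -> G 1%N z) ->
  (exists N, forall n, (N < n)%N -> forall y,
      ideal_pow (hmax G) n y <->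
      ideal_add
        (ideal_mul (ideal_gen (take d.-1 x)) (ideal_pow (hmax G) n.-1))
        (ideal_pow (ideal_gen (drop d.-1 x)) n) y)
  <-> quot_finite_over (alg_gen (take d.-1 x)) (alg_gen x).
Proof.
move=> HG _ _ _ x_lin.
have X1_lin z : z \in take d.-1 x -> G 1 z by move/mem_take; apply: x_lin.
have X2_lin z : z \in drop d.-1 x -> G 1 z by move/mem_drop; apply: x_lin.
have -> : alg_gen x = alg_gen (take d.-1 x ++ drop d.-1 x) by rewrite cat_take_drop.
split; first exact: split_ideal_quot_finite.
exact: quot_finite_split_ideal.
Qed.
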